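(* Let $\mathcal{T}$ be a class of trees. If $\mathcal{T}$ is not matching splittable, then $\mathcal{T}$ has unbounded fork number, or unbounded star number, or unbounded $\mathrm{C}$-number.
   Context: Let $T$ be a tree. A $2$-path of length $a$ is a path $x_0,\dots,x_a$ with $\deg(x_0)\ne 2$, $\deg(x_1)=\dots=\deg(x_{a-1})=2$, $\deg(x_a)\ne2$. A source is a vertex of degree $>2$. A ray of length $a$ is a $2$-path $x_0,\dots,x_a$ with $\deg(x_0)>2$ and $\deg(x_a)=1$; $x_0$ is its source. For a source $s$, $\deg_{\mathcal{L}}^a(s)$ is the number of rays of length $a$ with source $s$, $\deg_{\mathcal{L}}(s)=\sum_a\deg_{\mathcal{L}}^a(s)$, and $\deg_{\overline{\mathcal{L}}}(s)=\deg(s)-\deg_{\mathcal{L}}(s)$. Forks: for positive integers $a,b$, a source $s$ is an $a$-$b$-fork if $\deg_{\overline{\mathcal{L}}}(s)=1$ and either $a\ne b$ and $\deg_{\mathcal{L}}^a(s),\deg_{\mathcal{L}}^b(s)>0$, or $a=b$ and $\deg_{\mathcal{L}}^a(s)>1$. $\mathrm{F}_{a,b}(T)$ is the maximum size of an independent set consisting of $a$-$b$-forks. A class $\mathcal{T}$ has unbounded fork number if for every $B$ there are $a,b$ and $T\in\mathcal{T}$ with $\mathrm{F}_{a,b}(T)\ge B$. Stars: for $c\ge3$, a $c$-star of size $k$ is a collection of $k$ distinct rays of length $c$ with a common source; $\mathrm{S}_c(T)$ is the maximum size of a $c$-star in $T$. $\mathcal{T}$ has unbounded star number if for every $B$ there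 exist $c\ge3$ and $T\in\mathcal{T}$ with $\mathrm{S}_c(T)\ge B$. C-gadgets: a $\mathrm{C}$-gadget of order $d$ and length $k$ is a path $x_0,\dots,x_k$ in $T$ such that each inner vertex $x_i$ ($1\le i\le k-1$) either has $\deg(x_i)=2$, or is a source such that every neighbour $v\in N(x_i)\setminus\{x_{i-1},x_{i+1}\}$ is contained in a ray of length at most $d$ from $x_i$ to a leaf. $\mathrm{C}_d(T)$ is the length of the longest $\mathrm{C}$-gadget of order $d$ in $T$. $\mathcal{T}$ has unbounded $\mathrm{C}$-number if there exists $d>0$ such that for every $B$ there is $T\in\mathcal{T}$ with $\mathrm{C}_d(T)\ge B$. The matching-split number of a graph $H$ is the minimum size of $S\subseteq V(H)$ such that every vertex of $H[V(H)\setminus S]$ has degree at most $1$; $\mathcal{T}$ is matching splittable if this number is bounded over $\mathcal{T}$. *)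

From mathcomp Require Import all_boot.
Set Implicit Arguments. Unset Strict Implicit. Unset Printing Implicit Defensive.

Section TreeDefs.
Variables (V : finType) (e : rel V).

Definition is_tree : Prop :=
  [/\ 0 < #|V|, symmetric e, irreflexive e, (forall x y, connect e x y) &
      (forall c : seq V, ucycle e c -> size c < 3)].

Definition deg (v : V) : nat := #|[set u | e v u]|.

Definition source (v : V) : bool := 2 < deg v.

(* [is_ray s t] : s :: t = x_0, x_1, ..., x_a is a ray of length a = size t
   with source s: a (simple) path, deg x_0 > 2, deg x_a = 1 and the inner
   vertices x_1..x_{a-1} have degree 2. *)
Definition is_ray (s : V) (t : seq V) : bool :=
  [&& path e s t, uniq (s :: t), source s, deg (last s t) == 1 &
      all (fun x => deg x == 2) (take (size t).-1 t)].

Definition degLa (s : V) (a : nat) : nat := #|[set t : a.-tuple V | is_ray s t]|.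

(* deg_L(s) = sum_a deg_L^a(s); rays are simple paths, so a <= #|V| *)
Definition degL (s : V) : nat := \sum_(a < #|V|.+1) degLa s a.

Definition degLbar (s : V) : nat := deg s - degL s.

Definition is_fork (a b : nat) (s : V) : bool :=
  [&& source s, degLbar s == 1 &
      if a != b then (0 < degLa s a) && (0 < degLa s b) else 1 < degLa s a].

Definition independent (S : {set V}) : bool :=
  [forall x in S, forall y in S, ~~ e x y].

Definition Fab (a b : nat) : nat :=
  \max_(S : {set V} | independent S && [forall s in S, is_fork a b s]) #|S|.

Definition is_star (c : nat) (R : {set c.-tuple V}) : bool :=
  [exists s : V, [forall t in R, is_ray s t]].

Definition Sc (c : nat) : nat :=
  \max_(R : {set c.-tuple V} | is_star R) #|R|.

(* condition on an inner vertex x (with path-neighbours xp, xn) of a C-gadget of order d *)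
Definition gadget_inner_ok (d : nat) (xp x xn : V) : bool :=
  (deg x == 2) ||
  (source x &&
   [forall v, (e x v && (v != xp) && (v != xn)) ==>
      [exists a : 'I_d.+1, [exists r : a.-tuple V, is_ray x r && (v \in r)]]]).

(* x0 :: q = x_0, ..., x_k (k = size q) is a C-gadget of order d and length k *)
Definition is_gadget (d : nat) (x0 : V) (q : seq V) : bool :=
  [&& path e x0 q, uniq (x0 :: q) &
      [forall i : 'I_(size q), (0 < i) ==>
         gadget_inner_ok d (nth x0 (x0 :: q) i.-1) (nth x0 (x0 :: q) i)
                           (nth x0 (x0 :: q) i.+1)]].

(* C_d(T): longest C-gadget of order d (simple paths have length < #|V|) *)
Definition Cd (d : nat) : nat :=
  \max_(k < #|V| | [exists x0 : V, [exists q : k.-tuple V, is_gadget d x0 q]]) k.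

Definition msplit : nat :=
  \big[minn/#|V|]_(S : {set V} |
      [forall v in ~: S, #|[set u in ~: S | e v u]| <= 1]) #|S|.

End TreeDefs.

(* Call the vertices lying on no ray the core; it contains the sources, and a source s has
   exactly deg_Lbar(s) neighbours in the core. Deleting the vertices on rays of length at most
   2 leaves a graph of maximum degree 1, so the matching-split number is at most the number
   of vertices in the core or on longer rays. If the C-number of order 1 is below L, every
   ray is shorter than L, and with bounded star numbers each core vertex is the source of
   boundedly many rays of length 3..L-1; so it suffices to bound the core. In the forest
   induced on the core, a vertex of degree at most 1 is a source (leaves lie on rays) with
   deg_Lbar = 1, that is, a fork with ray lengths below L; forks of fixed lengths induce a
   matching, so the fork numbers bound them. Paths of core vertices of core degree 2 are
   C-gadgets of order L+1, hence short, and a forest with few leaves and short paths of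
   degree-2 vertices is small. The degenerate cases are a tree without sources, which is a
   path and so a C-gadget, and a source without core neighbours, which is the whole core. *)

From mathcomp Require Import all_boot zify.
From Stdlib Require Import Classical.
Set Implicit Arguments. Unset Strict Implicit. Unset Printing Implicit Defensive.

Section Counting.
Variable T : finType.
Implicit Type A : {set T}.

Lemma card_le2_mem A a b y :
  #|A| <= 2 -> a \in A -> b \in A -> y \in A -> a != b -> y = a \/ y = b.
Proof.
move=> A_le2 aA bA yA neq_ab; case: (eqVneq y a) => [|neq_ya]; first by left.
case: (eqVneq y b) => [|neq_yb]; first by right.
suff: 2 < #|A| by rewrite ltnNge A_le2.
by apply/card_gt2P; exists a, b, y; do 2 split => //; rewrite eq_sym.
Qed.

Lemma card_bigcup_leq (I : finType) (P : pred I) (F : I -> {set T}) :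
  #|\bigcup_(i | P i) F i| <= \sum_(i | P i) #|F i|.
Proof.
elim/big_rec2: _ => [|i n X _ IH]; first by rewrite cards0.
by apply: leq_trans (leq_card_setU _ _) _; rewrite leq_add2l.
Qed.

Lemma sum_bool_card A (P : pred T) : \sum_(x in A) P x = #|[set x in A | P x]|.
Proof. by rewrite -sum1dep_card big_mkcondr. Qed.

Lemma geq_bigmin_cond (P : pred T) (F : T -> nat) m x0 :
  P x0 -> \big[minn/m]_(x | P x) F x <= F x0.
Proof.
move=> Px0; have : x0 \in index_enum T by rewrite mem_index_enum.
elim: (index_enum T) => [|x r IH] //; rewrite inE big_cons => /orP[/eqP<-|/IH].
  by rewrite Px0 geq_minl.
by case: (P x) => // le_x0; apply: leq_trans (geq_minr _ _) le_x0.
Qed.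

End Counting.

(** * Paths in induced subforests *)

Section Tree.
Variables (V : finType) (e : rel V).
Hypotheses (e_sym : symmetric e) (e_irr : irreflexive e).
Hypothesis e_acyclic : forall c : seq V, ucycle e c -> size c < 3.
Hypothesis e_conn : forall x y, connect e x y.
Implicit Types (A : {set V}) (p q : seq V).

Definition deg_in A v := #|[set u in A | e v u]|.

Lemma deg_in_setT v : deg_in [set: V] v = deg e v.
Proof. by apply: eq_card => u; rewrite !inE. Qed.

Lemma deg_in_le_deg A v : deg_in A v <= deg e v.
Proof. by apply: subset_leq_card; apply/subsetP => u; rewrite !inE => /andP[]. Qed.

Definition path_in A x p := [&& path e x p, uniq (x :: p) & x :: p \subset A].

Definition longest_path_in A x p :=
  path_in A x p /\ forall q, path_in A x q -> size q <= size p.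

Lemma uniq_size_lt x p : uniq (x :: p) -> size p < #|V|.
Proof. by move=> xp_uniq; have := max_card (mem (x :: p)); rewrite (card_uniqP xp_uniq). Qed.

Lemma exists_longest_path_in A x : x \in A -> exists p, longest_path_in A x p.
Proof.
move=> xA; pose P n := [exists q : n.-tuple V, path_in A x q].
have P0 : P 0.
  by apply/existsP; exists [tuple]; apply/and3P; split=> //; apply/subsetP => u /[1!inE] /eqP->.
have P_le n : P n -> n <= #|V|.
  by case/existsP => q /and3P[_ /uniq_size_lt + _]; rewrite size_tuple => /ltnW.
have [n /existsP[p p_in] n_max] := ex_maxnP (ex_intro P 0 P0) P_le.
exists p; split => // q q_in; rewrite size_tuple; apply: n_max.
by apply/existsP; exists (in_tuple q).
Qed.

(* If y were on x :: p, its segment from y would close a cycle through the edge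
   (last x p, y); acyclicity leaves only the segments [y] and [y; last x p]. *)
Lemma uniq_rcons_path x p y :
  path e x p -> uniq (x :: p) -> e (last x p) y -> y != last x (belast x p) ->
  uniq (x :: rcons p y).
Proof.
move=> xp_path xp_uniq last_y y_neq; rewrite -rcons_cons rcons_uniq xp_uniq andbT.
apply/negP=> y_in; have [s1 [s2 xp_eq]] : exists s1 s2, x :: p = s1 ++ y :: s2.
  by case/splitPr: y_in => s1 s2; exists s1, s2.
have last_eq : last x p = last y s2 by rewrite -(last_cons x x p) xp_eq last_cat.
have ys2_path : path e y s2.
  by move: xp_path; rewrite -[path e x p]/(sorted e (x :: p)) xp_eq sorted_cat_cons => /andP[].
have ys2_uniq : uniq (y :: s2) by move: xp_uniq; rewrite xp_eq cat_uniq => /and3P[].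
have /e_acyclic : ucycle e (y :: s2).
  by rewrite /ucycle ys2_uniq andbT /= rcons_path ys2_path -last_eq last_y.
case: s2 xp_eq last_eq {ys2_path ys2_uniq} => [|z [|? ?]] //= xp_eq last_eq _.
  by move: last_y; rewrite last_eq e_irr.
move: y_neq.
have : rcons (belast x p) (last x p) = rcons (rcons s1 y) z.
  by rewrite -lastI xp_eq -!cats1 -catA.
by rewrite last_eq => /rcons_inj[->]; rewrite last_rcons eqxx.
Qed.

Lemma sorted_rev s : sorted e (rev s) = sorted e s.
Proof. by rewrite rev_sorted; case: s => //= x s; apply: eq_path => a b; exact: e_sym. Qed.

Lemma longest_path_last_nbr A x p y :
  longest_path_in A x p -> y \in A -> e (last x p) y -> y = last x (belast x p).
Proof.
case=> /and3P[xp_path xp_uniq xpA] p_max yA last_y; apply/eqP/negPn/negP => y_neq.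
have : path_in A x (rcons p y).
  rewrite /path_in rcons_path xp_path last_y uniq_rcons_path //=.
  apply/subsetP => u; rewrite -rcons_cons mem_rcons inE => /predU1P[-> //|].
  exact: (subsetP xpA).
by move/p_max; rewrite size_rcons ltnn.
Qed.

Lemma longest_path_last_deg A x p : longest_path_in A x p -> deg_in A (last x p) <= 1.
Proof.
move=> p_max; apply/card_le1_eqP => y z; rewrite !inE => /andP[yA last_y] /andP[zA last_z].
by rewrite (longest_path_last_nbr p_max yA) // (longest_path_last_nbr p_max zA).
Qed.

Lemma path_inner_nbrs x p u :
  path e x p -> uniq (x :: p) -> u \in p -> u != last x p ->
  exists a b, [/\ a \in x :: p, b \in x :: p, a != b, e u a & e u b].
Proof.
move=> + + u_in; case/splitPr: u_in => s1 s2; case: s2 => [|b s2]; first by rewrite last_cat eqxx.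
rewrite cat_path -cat_cons cat_uniq /= => /and3P[_ last_u /andP[u_b _]] /and3P[_ s1_u _] _.
exists (last x s1), b; split => //; last by rewrite e_sym.
- by rewrite -cat_cons mem_cat mem_last.
- by rewrite -cat_cons mem_cat !inE eqxx !orbT.
- by apply: contraNneq s1_u => <-; rewrite /= mem_last orbT.
Qed.

Lemma path_inner_deg x p u :
  path e x p -> uniq (x :: p) -> u \in p -> u != last x p -> 1 < deg e u.
Proof.
move=> xp_path xp_uniq u_in u_neq; apply/card_gt1P.
have [a [b [_ _ neq_ab u_a u_b]]] := path_inner_nbrs xp_path xp_uniq u_in u_neq.
by exists a, b; rewrite !inE.
Qed.

Lemma mem_last_belast x p : last x (belast x p) \in x :: p.
Proof.
by move: (mem_last x (belast x p)); rewrite inE => /predU1P[->|/mem_belast]; rewrite ?mem_head.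
Qed.

Lemma path_in_nbr_closed A x p u w :
  path_in A x p -> deg_in A x <= 1 -> {in p, forall v, deg_in A v <= 2} ->
  u \in x :: p -> u != last x p -> w \in A -> e u w -> w \in x :: p.
Proof.
case/and3P=> xp_path xp_uniq /subsetP xpA x_deg p_deg u_in u_neq wA u_w.
have nbr_in v : v \in x :: p -> e u v -> v \in [set y in A | e u y].
  by move=> v_in u_v; rewrite inE u_v andbT; apply: xpA.
have w_nbr : w \in [set y in A | e u y] by rewrite inE wA.
case/predU1P: u_in => [u_x | u_p].
  subst u; case: p xp_path xp_uniq xpA p_deg u_neq nbr_in => [|b p]; first by rewrite eqxx.
  move=> /andP[x_b _] _ _ _ _ nbr_in.
  have b_nbr : b \in [set y in A | e x y] by apply: nbr_in => //; rewrite !inE eqxx orbT.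
  by rewrite ((card_le1_eqP x_deg) b w b_nbr w_nbr) !inE eqxx orbT.
have [a [b [a_in b_in neq_ab u_a u_b]]] := path_inner_nbrs xp_path xp_uniq u_p u_neq.
by case: (card_le2_mem (p_deg u u_p) (nbr_in a a_in u_a) (nbr_in b b_in u_b) w_nbr neq_ab) => ->.
Qed.

Lemma longest_path_nbr_closed A x p u w :
  longest_path_in A x p -> deg_in A x <= 1 -> {in A, forall v, deg_in A v <= 2} ->
  u \in x :: p -> w \in A -> e u w -> w \in x :: p.
Proof.
move=> p_max x_deg A_deg u_in wA u_w; have [xp_in _] := p_max.
have [u_last | u_neq] := eqVneq u (last x p).
  by rewrite (longest_path_last_nbr p_max wA) -?u_last // mem_last_belast.
apply: (path_in_nbr_closed xp_in) u_in u_neq wA u_w => // v v_p.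
by apply: A_deg; case/and3P: xp_in => _ _ /subsetP; apply; rewrite inE v_p orbT.
Qed.

Lemma exists_deg_in_le1 A x : x \in A -> exists2 w, w \in A & deg_in A w <= 1.
Proof.
move=> xA; have [p p_max] := exists_longest_path_in xA.
exists (last x p); last exact: longest_path_last_deg p_max.
by case: p_max => /and3P[_ _ /subsetP] + _; apply; apply: mem_last.
Qed.

Lemma sum_deg_in_le A : \sum_(v in A) deg_in A v <= 2 * #|A|.
Proof.
have [n] := ubnP #|A|; elim: n A => // n IH A /ltnSE A_le.
have [-> | [x xA]] := set_0Vmem A; first by rewrite big_set0.
have [w wA w_deg] := exists_deg_in_le1 xA.
have deg_split v : deg_in A v = deg_in (A :\ w) v + e v w.
  rewrite /deg_in (cardsD1 w) inE wA addnC; congr (_ + _).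
  by apply: eq_card => u; rewrite !inE andbA.
have w_nbrs : \sum_(v in A :\ w) e v w <= deg_in A w.
  rewrite sum_bool_card; apply: subset_leq_card; apply/subsetP => v.
  by rewrite !inE e_sym => /andP[/andP[_ ->] ->].
have A_card : #|A| = #|A :\ w|.+1 by rewrite (cardsD1 w) wA.
have IHw : \sum_(v in A :\ w) deg_in (A :\ w) v <= 2 * #|A :\ w| by apply: IH; rewrite -A_card.
rewrite (big_setD1 w) //= (eq_bigr _ (fun v _ => deg_split v)) big_split /= A_card.
lia.
Qed.

Definition ends A := [set v in A | deg_in A v <= 1].

Lemma sum_deg_in_bound A (F : nat -> nat) a k :
  (forall n, F n + 2 * k <= a * (n <= 1) + k * n) ->
  \sum_(v in A) F (deg_in A v) <= a * #|ends A|.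
Proof.
move=> F_le; have : \sum_(v in A) (F (deg_in A v) + 2 * k) <=
                    \sum_(v in A) (a * (deg_in A v <= 1) + k * deg_in A v).
  by apply: leq_sum => v _; apply: F_le.
rewrite !big_split /= -!big_distrr /= sum_nat_const sum_bool_card.
have : k * \sum_(v in A) deg_in A v <= k * (2 * #|A|) by rewrite leq_mul2l sum_deg_in_le orbT.
rewrite -/(ends A); lia.
Qed.

Lemma deg_in_setD_closed A (X : {set V}) v :
  (forall u w, u \in X -> w \in A -> e u w -> w \in X) -> v \in A :\: X ->
  deg_in (A :\: X) v = deg_in A v.
Proof.
move=> X_closed; rewrite inE => /andP[vX vA]; apply: eq_card => u; rewrite !inE.
case: (boolP (u \in X)) => //= uX; apply/esym/negP => /andP[uA v_u].
by move/negP: vX; apply; apply: (X_closed u v uX vA); rewrite e_sym.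
Qed.

(* Peel off the component of an end: it is a path of fewer than K vertices. *)
Lemma card_le_mul_ends A K :
  {in A, forall v, deg_in A v <= 2} -> (forall x p, path_in A x p -> size p < K) ->
  #|A| <= K * #|ends A|.
Proof.
have [n] := ubnP #|A|; elim: n A => // n IH A /ltnSE A_le A_deg A_paths.
have [-> | [x xA]] := set_0Vmem A; first by rewrite cards0.
have [w wA w_end] := exists_deg_in_le1 xA.
have [p p_max] := exists_longest_path_in wA; have [wp_in _] := p_max.
pose X := [set u in w :: p].
have X_closed u v : u \in X -> v \in A -> e u v -> v \in X.
  by rewrite !inE; apply: longest_path_nbr_closed p_max w_end A_deg.
have XA : X \subset A.
  by apply/subsetP => u; rewrite inE; case/and3P: wp_in => _ _ /subsetP; apply.
have X_card : #|X| <= K.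
  by case/and3P: (wp_in) => _ wp_uniq _; rewrite cardsE (card_uniqP wp_uniq); apply: A_paths wp_in.
have AX_card : #|A| = #|A :\: X| + #|X| by rewrite -(cardsID X A) (setIidPr XA) addnC.
have AX_deg v : v \in A :\: X -> deg_in (A :\: X) v = deg_in A v.
  exact: deg_in_setD_closed X_closed.
have ends_sub : ends (A :\: X) \subset ends A :\ w.
  apply/subsetP => v; rewrite [v \in ends _]inE => /andP[vAX v_end].
  rewrite AX_deg // in v_end; move: vAX; rewrite in_setD => /andP[vX vA].
  rewrite in_setD1 inE vA v_end !andbT; apply: contraNneq vX => ->.
  by rewrite inE mem_head.
have ends_lt : #|ends (A :\: X)| < #|ends A|.
  apply: leq_ltn_trans (subset_leq_card ends_sub) _.
  by rewrite [#|ends A|](cardsD1 w) inE wA w_end.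
have IH_AX : #|A :\: X| <= K * #|ends (A :\: X)|.
  apply: IH.
  - have : 0 < #|X| by apply/card_gt0P; exists w; rewrite inE mem_head.
    by move: A_le; rewrite AX_card; lia.
  - by move=> v vAX; rewrite AX_deg //; apply: A_deg; move: vAX; rewrite inE => /andP[].
  - move=> y q /and3P[yq_path yq_uniq /subsetP yqAX]; apply: (A_paths y).
    by rewrite /path_in yq_path yq_uniq; apply/subsetP => u /yqAX /setDP[].
rewrite AX_card; apply: leq_trans (leq_add IH_AX X_card) _.
by rewrite -mulnSr leq_mul2l ends_lt orbT.
Qed.

Lemma half_independent (S : {set V}) :
  {in S, forall v, deg_in S v <= 1} ->
  exists2 I : {set V}, I \subset S & independent e I /\ #|S| <= 2 * #|I|.
Proof.
move=> S_deg.
pose I := [set x in S | [forall y in S, e x y ==> (enum_rank x < enum_rank y)]].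
have IS : I \subset S by apply/subsetP => x; rewrite inE => /andP[].
exists I => //; split.
  apply/forall_inP => x; rewrite inE => /andP[xS /forall_inP x_min].
  apply/forall_inP => y; rewrite inE => /andP[yS /forall_inP y_min].
  apply/negP => x_y; have := x_min y yS; have := y_min x xS.
  by rewrite e_sym x_y /=; lia.
have SI_sub : S :\: I \subset \bigcup_(y in I) [set x in S | e y x].
  apply/subsetP => x; rewrite inE => /andP[xI xS].
  have : ~~ [forall y in S, e x y ==> (enum_rank x < enum_rank y)] by move: xI; rewrite inE xS.
  case/forall_inPn => y yS; rewrite negb_imply -leqNgt => /andP[x_y y_le_x].
  apply/bigcupP; exists y; last by rewrite inE xS e_sym.
  rewrite inE yS; apply/forall_inP => z zS; apply/implyP => y_z.
  have -> : z = x by apply: (card_le1_eqP (S_deg y yS)); rewrite inE ?zS ?xS // e_sym.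
  rewrite ltn_neqAle y_le_x andbT; apply: contraTneq x_y => /val_inj/enum_rank_inj ->.
  by rewrite e_irr.
have : #|S :\: I| <= #|I|.
  apply: leq_trans (subset_leq_card SI_sub) _; apply: leq_trans (card_bigcup_leq _ _) _.
  by rewrite -sum1_card; apply: leq_sum => y yI; apply: S_deg (subsetP IS y yI).
by have := cardsID I S; rewrite (setIidPr IS); lia.
Qed.

Lemma connected_closed (P : V -> Prop) x :
  P x -> (forall u w, P u -> e u w -> P w) -> forall y, P y.
Proof.
move=> Px P_closed y; have /connectP[q] := e_conn x y.
elim: q x Px => [|w q IH] x Px /=; first by move=> _ ->.
by case/andP=> x_w; apply: IH; apply: P_closed x_w.
Qed.

Lemma exists_exit_edge (S : {set V}) x y :
  x \in S -> y \notin S -> exists u w, [/\ u \in S, w \notin S & e u w].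
Proof.
move=> xS yS; apply: NNPP => no_exit; move/negP: yS; apply.
apply: (connected_closed (P := fun v => v \in S) xS) => u w uS u_w.
by apply/negPn/negP => wS; apply: no_exit; exists u, w.
Qed.

Lemma deg_gt0 v w : v != w -> 0 < deg e v.
Proof.
move=> neq_vw; have /connectP[q v_path w_last] := e_conn v w.
case: q v_path w_last => [_ w_v | u q /andP[v_u _] _]; first by rewrite w_v eqxx in neq_vw.
by apply/card_gt0P; exists u; rewrite inE.
Qed.

(** * Rays and the core *)

Lemma ray_source s t : is_ray e s t -> source e s.
Proof. by case/and5P. Qed.

Lemma ray_last_deg s t : is_ray e s t -> deg e (last s t) = 1.
Proof. by case/and5P => _ _ _ /eqP. Qed.

Lemma ray_neq_nil s t : is_ray e s t -> t != [::].
Proof.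
by case: t => // /and5P[_ _ s_source /eqP s_deg _]; move: s_source; rewrite /source s_deg.
Qed.

Lemma ray_inner_deg s t x : is_ray e s t -> x \in t -> x != last s t -> deg e x = 2.
Proof.
case/lastP: t => [|t z] //; rewrite /is_ray size_rcons -cats1 take_size_cat // cats1.
case/and5P => _ _ _ _ /allP t_deg2; rewrite mem_rcons last_rcons inE.
by case/predU1P => [-> | /t_deg2/eqP //]; rewrite eqxx.
Qed.

Lemma ray_deg_le2 s t x : is_ray e s t -> x \in t -> deg e x <= 2.
Proof.
move=> st_ray x_t; have [-> | x_neq] := eqVneq x (last s t).
  by rewrite (ray_last_deg st_ray).
by rewrite (ray_inner_deg st_ray x_t x_neq).
Qed.

Lemma is_ray_intro s t :
  path e s t -> uniq (s :: t) -> source e s -> deg e (last s t) = 1 ->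
  {in t, forall x, x != last s t -> deg e x = 2} -> is_ray e s t.
Proof.
move=> st_path st_uniq s_source last_deg inner_deg.
rewrite /is_ray st_path st_uniq s_source last_deg eqxx /=.
case/lastP: t st_uniq inner_deg {st_path last_deg} => [|t z] //.
rewrite size_rcons -cats1 take_size_cat // cats1 last_rcons => st_uniq inner_deg.
apply/allP => x x_t; apply/eqP/inner_deg; first by rewrite mem_rcons inE x_t orbT.
apply: contraTneq x_t => ->; move: st_uniq.
by rewrite -rcons_cons rcons_uniq inE negb_or => /andP[/andP[_ /negPf->]].
Qed.

Lemma ray_nbr s t1 x t2 y :
  is_ray e s (t1 ++ x :: t2) -> e x y -> y = last s t1 \/ y \in t2.
Proof.
move=> st_ray x_y; have /and5P[st_path st_uniq _ _ _] := st_ray.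
move: st_path; rewrite cat_path /= => /and3P[_ pred_x xt2_path].
have nbr_x v : e x v -> v \in [set u | e x u] by rewrite inE.
have x_pred := nbr_x _ (etrans (e_sym _ _) pred_x).
case: t2 st_ray xt2_path st_uniq => [|b t2] st_ray xt2_path st_uniq.
  left; apply: (card_le1_eqP _) x_pred (nbr_x _ x_y).
  by have := ray_last_deg st_ray; rewrite last_cat /deg => ->.
have [s_disj xt2_uniq] : ~~ has (mem (s :: t1)) (x :: b :: t2) /\ uniq (x :: b :: t2).
  by move: st_uniq; rewrite -cat_cons cat_uniq => /and3P[].
have x_deg : deg e x = 2.
  apply: (ray_inner_deg st_ray); first by rewrite mem_cat mem_head orbT.
  by rewrite last_cat /=; apply: contraTneq xt2_uniq => ->; rewrite /= mem_last.
have neq_pb : last s t1 != b by apply: contraNneq s_disj => <-; rewrite /= mem_last orbT.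
move: xt2_path => /andP[x_b _].
have [-> | ->] := card_le2_mem (eq_leq x_deg) x_pred (nbr_x _ x_b) (nbr_x _ x_y) neq_pb.
  by left.
by right; rewrite mem_head.
Qed.

Lemma ray_nbr_mem s t x y : is_ray e s t -> x \in t -> e x y -> y \in s :: t.
Proof.
move=> + x_t; case/splitPr: x_t => t1 t2 st_ray x_y.
have [-> | y_t2] := ray_nbr st_ray x_y; first by rewrite -cat_cons mem_cat mem_last.
by rewrite inE mem_cat inE y_t2 !orbT.
Qed.

Lemma head_neq_last x y q : uniq (x :: y :: q) -> x != last y q.
Proof. by apply: contraTneq => ->; rewrite /= mem_last. Qed.

(* Along vertices of degree 2 a walk has no choice, so it is determined by its first edge. *)
Lemma deg2_walk_eq u x t1 t2 :
  uniq [:: u, x & t1] -> uniq [:: u, x & t2] -> e u x -> path e x t1 -> path e x t2 ->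
  {in x :: t1, forall y, y != last x t1 -> deg e y = 2} -> deg e (last x t1) = 1 ->
  {in x :: t2, forall y, y != last x t2 -> deg e y = 2} -> deg e (last x t2) = 1 ->
  t1 = t2.
Proof.
elim: t1 u x t2 => [|y t1 IH] u x [|z t2] //= uniq1 uniq2 u_x path1 path2.
all: move=> inner1 last1 inner2 last2.
- case/andP: uniq2 => _ /head_neq_last x_neq.
  by have := inner2 x (mem_head _ _) x_neq; rewrite last1.
- case/andP: uniq1 => _ /head_neq_last x_neq.
  by have := inner1 x (mem_head _ _) x_neq; rewrite last2.
case/andP: path1 => x_y path1; case/andP: path2 => x_z path2.
have x_neq : x != last y t1 by apply: head_neq_last; case/andP: uniq1.
have x_deg : deg e x = 2 := inner1 x (mem_head _ _) x_neq.
have nbr_x v : e x v -> v \in [set u | e x u] by rewrite inE.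
have neq_uy : u != y by apply: contraTneq uniq1 => ->; rewrite /= !inE eqxx !orbT.
have [z_u | z_y] := card_le2_mem (eq_leq x_deg) (nbr_x _ (etrans (e_sym _ _) u_x))
  (nbr_x _ x_y) (nbr_x _ x_z) neq_uy.
  by move: uniq2; rewrite z_u /= !inE eqxx !orbT.
subst z; congr (_ :: _); apply: (IH x y) => //.
- by case/andP: uniq1.
- by case/andP: uniq2.
- by move=> v v_in; apply: inner1; rewrite inE v_in orbT.
- by move=> v v_in; apply: inner2; rewrite inE v_in orbT.
Qed.

Lemma ray_head_inj s t1 t2 :
  is_ray e s t1 -> is_ray e s t2 -> head s t1 = head s t2 -> t1 = t2.
Proof.
case: t1 => [/ray_neq_nil // | u t1] ray1; case: t2 => [/ray_neq_nil // | v t2] ray2 /= u_v.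
subst v.
have /and5P[/andP[s_u path1] uniq1 _ _ _] := ray1.
have /and5P[/andP[_ path2] uniq2 _ _ _] := ray2.
congr (_ :: _); apply: (deg2_walk_eq uniq1 uniq2 s_u path1 path2).
- by move=> y y_in; apply: ray_inner_deg ray1 y_in.
- exact: ray_last_deg ray1.
- by move=> y y_in; apply: ray_inner_deg ray2 y_in.
- exact: ray_last_deg ray2.
Qed.

Definition ray_vertices n :=
  [set x | [exists s, exists a : 'I_n, exists t : a.-tuple V, is_ray e s t && (x \in t)]].

Lemma ray_verticesP n x :
  reflect (exists s t, [/\ is_ray e s t, size t < n & x \in t]) (x \in ray_vertices n).
Proof.
rewrite inE; apply: (iffP existsP) => [[s /existsP[a /existsP[t /andP[st_ray x_t]]]] |].
  by exists s, t; rewrite size_tuple ltn_ord.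
case=> s [t [st_ray t_lt x_t]]; exists s; apply/existsP; exists (Ordinal t_lt).
by apply/existsP; exists (in_tuple t); rewrite st_ray.
Qed.

(* Rays are simple paths, so they have fewer than #|V| edges: the core consists of the
   vertices lying on no ray. *)
Definition core := ~: ray_vertices #|V|.

Lemma notin_coreP x : reflect (exists s t, is_ray e s t /\ x \in t) (x \notin core).
Proof.
rewrite inE negbK; apply: (iffP (ray_verticesP _ _)) => [[s [t [? _ ?]]] | [s [t [st_ray x_t]]]].
  by exists s, t.
by exists s, t; split => //; case/and5P: st_ray => _ /uniq_size_lt.
Qed.

Lemma source_in_core s : source e s -> s \in core.
Proof.
move=> s_source; apply: contraT => /notin_coreP[s' [t [s't_ray s_t]]].
by move: s_source; rewrite /source ltnNge (ray_deg_le2 s't_ray s_t).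
Qed.

Lemma ray_from_nbr s u :
  source e s -> e s u -> u \notin core -> exists t, is_ray e s (u :: t).
Proof.
move=> s_source s_u /notin_coreP[s' [t' [+ u_t]]]; case/splitPr: u_t => t1 t2 s't_ray.
have ray_neq v : v \in t1 ++ u :: t2 -> v != s.
  move=> v_t; apply: contraTneq (source_in_core s_source) => <-.
  by apply/notin_coreP; exists s', (t1 ++ u :: t2).
have [s_pred | s_t2] := ray_nbr s't_ray (etrans (e_sym _ _) s_u); last first.
  by move: (ray_neq s); rewrite mem_cat inE s_t2 !orbT eqxx => /(_ isT).
case: t1 s't_ray s_pred ray_neq => [|b t1] s't_ray /= s_pred ray_neq.
  by exists t2; rewrite s_pred.
by move: (ray_neq (last b t1)); rewrite -cat_cons mem_cat mem_last -s_pred eqxx => /(_ isT).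
Qed.

Lemma degL_ray_nbrs s : source e s -> degL e s = #|[set u | e s u & u \notin core]|.
Proof.
move=> s_source.
pose H (a : 'I_#|V|.+1) := [set head s (val t) | t in [set t : a.-tuple V | is_ray e s t]].
have H_card a : #|H a| = degLa e s a.
  by apply: card_in_imset => t1 t2; rewrite !inE => ray1 ray2 /(ray_head_inj ray1 ray2)/val_inj.
have H_disj a b : a != b -> [disjoint H a & H b].
  move=> neq_ab; apply/pred0P => u /=; apply/negP.
  case/andP=> /imsetP[t1 ray1 ->] /imsetP[t2 ray2]; rewrite inE in ray1; rewrite inE in ray2.
  move/(ray_head_inj ray1 ray2)/(congr1 size); rewrite !size_tuple => /val_inj/eqP.
  by rewrite (negPf neq_ab).
have -> : [set u | e s u & u \notin core] = \bigcup_a H a.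
  apply/setP => u; rewrite inE; apply/andP/bigcupP => [[s_u u_ray] | [a _ /imsetP[t]]].
    have [t st_ray] := ray_from_nbr s_source s_u u_ray.
    have t_lt : size (u :: t) < #|V|.+1 by case/and5P: st_ray => _ /uniq_size_lt /ltnW.
    by exists (Ordinal t_lt) => //; apply/imsetP; exists (in_tuple (u :: t)); rewrite ?inE.
  rewrite inE; case: t => -[/= _ /ray_neq_nil // | v t /= _] st_ray ->.
  split; first by case/and5P: st_ray => /andP[].
  by apply/notin_coreP; exists s, (v :: t); rewrite mem_head.
rewrite -sum1_card partition_disjoint_bigcup //= /degL; apply: eq_bigr => a _.
by rewrite sum1_card H_card.
Qed.

Lemma degLbar_core s : source e s -> degLbar e s = deg_in core s.
Proof.
move=> s_source; rewrite /degLbar degL_ray_nbrs // /deg -(cardsID core [set u | e s u]).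
have -> : [set u | e s u & u \notin core] = [set u | e s u] :\: core.
  by apply/setP => u; rewrite !inE andbC.
by rewrite addnK; apply: eq_card => u; rewrite !inE andbC.
Qed.

Lemma core_sub_source s : source e s -> deg_in core s = 0 -> core \subset [set s].
Proof.
move=> s_source s_deg.
have reach : forall y, y = s \/ exists t, is_ray e s t /\ y \in t.
  apply: (connected_closed (x := s)); first by left.
  move=> u w [-> | [t [st_ray u_t]]] u_w.
    have w_ray : w \notin core.
      apply/negP => w_core; move/eqP: s_deg; rewrite cards_eq0 => /eqP/setP/(_ w).
      by rewrite in_set in_set0 w_core u_w.
    have [t st_ray] := ray_from_nbr s_source u_w w_ray.
    by right; exists (w :: t); rewrite mem_head.
  have := ray_nbr_mem st_ray u_t u_w; rewrite inE => /predU1P[-> | w_t]; first by left.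
  by right; exists t.
apply/subsetP => x x_core; rewrite inE; case: (reach x) => [-> // | [t [st_ray x_t]]].
have : x \notin core by apply/notin_coreP; exists s, t.
by rewrite x_core.
Qed.

Lemma deg_in_core_deg2 v : v \in core -> deg e v = 2 -> deg_in core v = 2.
Proof.
move=> v_core v_deg; apply/eqP; rewrite eqn_leq -{1}v_deg deg_in_le_deg -v_deg.
apply/subset_leq_card/subsetP => u; rewrite in_set => v_u; rewrite in_set v_u andbT.
apply: contraT => /notin_coreP[s [t [st_ray u_t]]].
have := ray_nbr_mem st_ray u_t (etrans (e_sym _ _) v_u); rewrite inE => /predU1P[v_s | v_t].
  by move: (ray_source st_ray); rewrite /source -v_s v_deg.
have : v \notin core by apply/notin_coreP; exists s, t.
by rewrite v_core.
Qed.

Lemma ray_of_rev_path v p w :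
  path e v (rcons p w) -> uniq (v :: rcons p w) -> source e w -> deg e v = 1 ->
  {in p, forall x, deg e x <= 2} -> is_ray e w (rev (v :: p)).
Proof.
move=> vpw_path vpw_uniq w_source v_deg p_deg.
have rev_eq : rev (v :: rcons p w) = w :: rev (v :: p) by rewrite !rev_cons rev_rcons.
have w_notin_p : w \notin p.
  by move: vpw_uniq; rewrite -rcons_cons rcons_uniq inE negb_or => /andP[/andP[_ ->]].
apply: is_ray_intro => //.
- by rewrite -[path e w _]/(sorted e (w :: rev (v :: p))) -rev_eq sorted_rev; apply: vpw_path.
- by rewrite -rev_eq rev_uniq.
- by rewrite rev_cons last_rcons.
move=> x; rewrite rev_cons last_rcons mem_rcons inE mem_rev => /predU1P[-> | x_p].
  by rewrite eqxx.
move=> _; apply/eqP; rewrite eqn_leq p_deg //; apply: (path_inner_deg vpw_path vpw_uniq).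
  by rewrite mem_rcons inE x_p orbT.
by rewrite last_rcons; apply: contraNneq w_notin_p => <-.
Qed.

(* Walk from the leaf through non-sources as far as possible: the walk can only be left
   at its far end, and it must be left because a source exists; reversed, it is a ray. *)
Lemma leaf_notin_core s0 v : source e s0 -> deg e v = 1 -> v \notin core.
Proof.
move=> s0_source v_deg; pose A := [set u | ~~ source e u].
have A_deg u : u \in A -> deg_in A u <= 2.
  by rewrite inE /source -leqNgt; apply: leq_trans (deg_in_le_deg _ _).
have vA : v \in A by rewrite inE /source v_deg.
have [p p_max] := exists_longest_path_in vA.
have [/and3P[vp_path vp_uniq /subsetP vpA] _] := p_max.
have p_deg : {in p, forall x, deg e x <= 2}.
  by move=> x x_p; have := vpA x; rewrite !inE x_p orbT /source -leqNgt => ->.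
have v_end : deg_in A v <= 1 by rewrite (leq_trans (deg_in_le_deg _ _)) ?v_deg.
have [u [w []]] : exists u w, [/\ u \in [set x in v :: p], w \notin [set x in v :: p] & e u w].
  apply: (exists_exit_edge (x := v) (y := s0)); first by rewrite inE mem_head.
  by rewrite in_set; apply: contraTN s0_source => /vpA; rewrite inE.
move=> u_in w_out u_w; rewrite !inE in u_in w_out.
have w_source : source e w.
  apply: contraNT w_out => w_nsource.
  by apply: longest_path_nbr_closed p_max v_end A_deg u_in _ u_w; rewrite inE.
have u_last : u = last v p.
  apply/eqP; apply: contraNT w_out => u_neq.
  apply: (path_in_nbr_closed (A := [set: V])) u_in u_neq (in_setT w) u_w.
  - by rewrite /path_in vp_path vp_uniq; apply/subsetP => x; rewrite inE.
  - by rewrite deg_in_setT v_deg.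
  - by move=> x x_p; rewrite deg_in_setT p_deg.
have vpw_uniq : uniq (v :: rcons p w) by rewrite -rcons_cons rcons_uniq w_out vp_uniq.
have vpw_path : path e v (rcons p w) by rewrite rcons_path vp_path -u_last u_w.
apply/notin_coreP; exists w, (rev (v :: p)); split; last by rewrite mem_rev mem_head.
exact: ray_of_rev_path vpw_path vpw_uniq w_source v_deg p_deg.
Qed.

(** * C-gadgets *)

Lemma gadget_intro d x0 q :
  path e x0 q -> uniq (x0 :: q) ->
  (forall xp x xn, e xp x -> e x xn -> xp != xn -> x \in q -> x != last x0 q ->
     xp \in x0 :: q -> xn \in q -> gadget_inner_ok e d xp x xn) ->
  is_gadget e d x0 q.
Proof.
move=> x0q_path x0q_uniq inner_ok; rewrite /is_gadget x0q_path x0q_uniq /=.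
apply/forallP => -[[|k] //= k_lt]; have /pathP step := x0q_path.
have q_uniq : uniq q by case/andP: x0q_uniq.
apply: inner_ok.
- exact: step (ltnW k_lt).
- exact: step k_lt.
- by rewrite -[nth x0 q k.+1]/(nth x0 (x0 :: q) k.+2) (nth_uniq x0 _ _ x0q_uniq) /=; lia.
- by rewrite mem_nth // ltnW.
- rewrite -nth_last (nth_uniq x0 _ _ q_uniq) ?ltn_predL ?(ltnW k_lt) ?(leq_ltn_trans _ k_lt) //.
  by rewrite -subn1; apply/eqP; lia.
- by rewrite mem_nth /=; lia.
- by rewrite mem_nth.
Qed.

Lemma gadget_size_le_Cd d x0 q : is_gadget e d x0 q -> size q <= Cd e d.
Proof.
move=> gadget; have q_lt : size q < #|V| by case/and3P: gadget => _ /uniq_size_lt.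
apply: (@leq_bigmax_cond _ _ (fun k : 'I_#|V| => nat_of_ord k) (Ordinal q_lt)).
by apply/existsP; exists x0; apply/existsP; exists (in_tuple q).
Qed.

Lemma deg2_gadget d x0 q :
  path e x0 q -> uniq (x0 :: q) -> {in q, forall x, x != last x0 q -> deg e x = 2} ->
  is_gadget e d x0 q.
Proof.
move=> x0q_path x0q_uniq q_deg; apply: gadget_intro => // xp x xn _ _ _ x_q x_neq _ _.
by rewrite /gadget_inner_ok q_deg ?eqxx.
Qed.

Lemma ray_size_le_Cd d s t : is_ray e s t -> size t <= Cd e d.
Proof.
move=> st_ray; have /and5P[st_path st_uniq _ _ _] := st_ray.
apply: (@gadget_size_le_Cd d s); apply: deg2_gadget => // x x_t.
exact: ray_inner_deg st_ray x_t.
Qed.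

(* Without sources the tree is a path, and a path is a gadget of any order. *)
Lemma card_le_Cd_no_source : (forall v, ~~ source e v) -> #|V| <= (Cd e 1).+1.
Proof.
move=> no_source; have [V0 | [x _]] := set_0Vmem [set: V].
  by rewrite -cardsT V0 cards0.
have V_deg v : deg_in [set: V] v <= 2 by rewrite deg_in_setT leqNgt no_source.
have [w _ w_end] := exists_deg_in_le1 (in_setT x).
have [p p_max] := exists_longest_path_in (in_setT w).
have [/and3P[wp_path wp_uniq _] _] := p_max.
have wp_all : forall y, y \in w :: p.
  apply: (connected_closed (x := w)); first exact: mem_head.
  by move=> u v u_in u_v; apply: longest_path_nbr_closed p_max w_end _ u_in (in_setT v) u_v.
have /gadget_size_le_Cd : is_gadget e 1 w p.
  apply: deg2_gadget => // y y_p y_neq; apply/eqP.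
  by rewrite eqn_leq (path_inner_deg wp_path wp_uniq y_p y_neq) andbT -deg_in_setT.
suff : #|V| <= size (w :: p) by rewrite /=; lia.
by rewrite -(card_uniqP wp_uniq); apply/subset_leq_card/subsetP => y _; apply: wp_all.
Qed.

Lemma core_end_source s0 v :
  source e s0 -> v \in core -> deg_in core v <= 1 -> source e v.
Proof.
move=> s0_source v_core v_end; have [-> // | neq_vs0] := eqVneq v s0.
case: (ltngtP (deg e v) 2) => [v_lt | // | v_deg2].
  have v_deg1 : deg e v = 1 by have := deg_gt0 neq_vs0; lia.
  by move: v_core; rewrite (negPf (leaf_notin_core s0_source v_deg1)).
by move: v_end; rewrite deg_in_core_deg2.
Qed.

Lemma degLa0 s : degLa e s 0 = 0.
Proof. by apply: eq_card0 => t; rewrite inE; apply/negP => /ray_neq_nil; rewrite tuple0. Qed.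

Lemma fork_gt0 a b s : is_fork e a b s -> 0 < a /\ 0 < b.
Proof.
case/and3P => _ _; case: (eqVneq a b) => [<- | _] /=.
  by case: a => [|a]; rewrite ?degLa0.
by case/andP; case: a => [|a]; rewrite ?degLa0 //; case: b => [|b]; rewrite ?degLa0.
Qed.

Lemma fork_of_core_end L s :
  Cd e 1 < L -> source e s -> deg_in core s = 1 -> exists a b : 'I_L, is_fork e a b s.
Proof.
move=> Cd_lt s_source s_core.
have : 1 < #|[set u | e s u & u \notin core]|.
  rewrite -degL_ray_nbrs //; have := degLbar_core s_source.
  by move: s_source; rewrite s_core /degLbar /source; lia.
case/card_gt1P => u1 [u2 [/[1!in_set] /andP[s_u1 u1_ray] /[1!in_set] /andP[s_u2 u2_ray] neq_u]].
have [t1 ray1] := ray_from_nbr s_source s_u1 u1_ray.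
have [t2 ray2] := ray_from_nbr s_source s_u2 u2_ray.
have t_lt t : is_ray e s t -> size t < L.
  by move=> st_ray; apply: leq_ltn_trans (ray_size_le_Cd 1 st_ray) Cd_lt.
exists (Ordinal (t_lt _ ray1)), (Ordinal (t_lt _ ray2)).
rewrite /is_fork s_source degLbar_core // s_core /=.
have degLa_gt0 t : is_ray e s t -> 0 < degLa e s (size t).
  by move=> st_ray; apply/card_gt0P; exists (in_tuple t); rewrite inE.
have [eq_size | _] := eqVneq (size t1).+1 (size t2).+1; last first.
  by rewrite (degLa_gt0 _ ray1) (degLa_gt0 _ ray2).
have size_u2t2 : size (u2 :: t2) == (size t1).+1 by rewrite eq_size.
apply/card_gt1P; exists (in_tuple (u1 :: t1)), (Tuple size_u2t2); rewrite !inE ray1 ray2.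
by split=> //; apply: contraNneq neq_u => /(congr1 val) [->].
Qed.

(** * Bounding the matching-split number *)

Lemma leq_Fab a b (I : {set V}) :
  independent e I -> {in I, forall s, is_fork e a b s} -> #|I| <= Fab e a b.
Proof.
move=> I_indep I_forks; apply: (leq_bigmax_cond (F := fun S : {set V} => #|S|)).
by rewrite I_indep; apply/forall_inP.
Qed.

Lemma leq_Sc c s : #|[set t : c.-tuple V | is_ray e s t]| <= Sc e c.
Proof.
apply: (leq_bigmax_cond (F := fun R : {set c.-tuple V} => #|R|)).
by apply/existsP; exists s; apply/forall_inP => t; rewrite inE.
Qed.

Lemma msplit_le (S : {set V}) :
  {in ~: S, forall v, #|[set u in ~: S | e v u]| <= 1} -> msplit e <= #|S|.
Proof.
by move=> S_split; apply: (@geq_bigmin_cond _ _ (fun S : {set V} => #|S|)); apply/forall_inP.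
Qed.

(* A neighbour of a ray vertex lies on the same ray or is its source, and no source lies
   on a ray. *)
Lemma short_ray_nbrs v :
  v \in ray_vertices 3 -> #|[set u in ray_vertices 3 | e v u]| <= 1.
Proof.
case/ray_verticesP => s [t [st_ray t_lt v_t]].
have s_out : s \notin ray_vertices 3.
  apply/negP => /ray_verticesP[s' [t' [ray' _ s_t']]]; move: (ray_source st_ray).
  by rewrite /source ltnNge (ray_deg_le2 ray' s_t').
have nbrs_sub : [set u in ray_vertices 3 | e v u] \subset [set u in t] :\ v.
  apply/subsetP => u /setIdP[u_short v_u].
  have := ray_nbr_mem st_ray v_t v_u; rewrite inE => /predU1P[u_s | u_t].
    by rewrite u_s (negPf s_out) in u_short.
  by rewrite in_setD1 inE u_t andbT; apply: contraTneq v_u => ->; rewrite e_irr.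
apply: leq_trans (subset_leq_card nbrs_sub) _.
have : #|[set u in t]| <= size t by rewrite cardsE card_size.
by rewrite (cardsD1 v) inE v_t add1n; lia.
Qed.

Lemma card_ends_deg2 A :
  #|ends [set v in A | deg_in A v == 2]| <= \sum_(v in A) (deg_in A v != 2) * deg_in A v.
Proof.
set D := [set v in A | deg_in A v == 2].
have ends_sub : ends D \subset \bigcup_(w in A | deg_in A w != 2) [set u in A | e w u].
  apply/subsetP => v /setIdP[/setIdP[vA /eqP v_deg] v_end].
  have : [set u in D | e v u] \proper [set u in A | e v u].
    rewrite properEcard -/(deg_in D v) -/(deg_in A v) v_deg (leq_ltn_trans v_end) // andbT.
    by apply/subsetP => u /setIdP[/setIdP[uA _] v_u]; rewrite inE uA.
  case/properP => _ [w /setIdP[wA v_w] w_notD].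
  apply/bigcupP; exists w; last by rewrite inE vA e_sym.
  by rewrite wA; apply: contra w_notD => /eqP w_deg; rewrite !inE wA w_deg v_w.
apply: leq_trans (subset_leq_card ends_sub) _; apply: leq_trans (card_bigcup_leq _ _) _.
by rewrite big_mkcondr /=; apply: leq_sum => w _; case: (_ != 2); rewrite ?mul1n.
Qed.

(* Degree counting in a forest: vertices of degree 2 come in paths of fewer than K vertices,
   each ending next to a vertex of another degree, and those are controlled by the leaves. *)
Lemma card_le_ends A K :
  (forall x p, path_in [set v in A | deg_in A v == 2] x p -> size p < K) ->
  #|A| <= (3 + 7 * K) * #|ends A|.
Proof.
set D := [set v in A | deg_in A v == 2] => D_paths.
have D_deg : {in D, forall v, deg_in D v <= 2}.
  move=> v /setIdP[_ /eqP <-]; apply/subset_leq_card/subsetP => u.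
  by case/setIdP=> /setIdP[uA _] v_u; rewrite inE uA.
have D_card := card_le_mul_ends D_deg D_paths.
have low_sum := @sum_deg_in_bound A (fun n => (n != 2) * n) 7 3.
have high_sum := @sum_deg_in_bound A (fun n => 2 < n) 2 1.
have A_split : #|A| <= #|ends A| + #|D| + \sum_(v in A) (2 < deg_in A v).
  rewrite -sum1_card /ends /D -!sum_bool_card -!big_split /=; apply: leq_sum => v _.
  by case: (deg_in A v) => [|[|[|n]]].
have : K * #|ends D| <= K * (7 * #|ends A|).
  rewrite leq_mul2l (leq_trans (card_ends_deg2 A)) ?orbT // low_sum // => n.
  by case: n => [|[|[|n]]] //=; lia.
have : \sum_(v in A) (2 < deg_in A v) <= 2 * #|ends A|.
  by apply: high_sum => n; case: n => [|[|[|n]]] //=; lia.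
lia.
Qed.

Section Bounds.
Variables (B1 B2 L K : nat).
Hypothesis Fab_lt : forall a b, 0 < a -> 0 < b -> Fab e a b < B1.
Hypothesis Sc_lt : forall c, 2 < c -> Sc e c < B2.
Hypothesis Cd1_lt : Cd e 1 < L.
Hypothesis CdL_lt : Cd e L.+1 < K.

(* A source on such a path has two core neighbours on the path; its other neighbours
   start rays, which are shorter than L. *)
Lemma core_deg2_path_gadget x p :
  path_in [set v in core | deg_in core v == 2] x p -> is_gadget e L.+1 x p.
Proof.
case/and3P=> xp_path xp_uniq /subsetP xpD.
apply: gadget_intro => // yp y yn yp_y y_yn neq_pn y_p _ yp_in yn_p.
have inD z : z \in x :: p -> (z \in core) && (deg_in core z == 2).
  by move/xpD; rewrite in_set.
have p_sub : {subset p <= x :: p} := @mem_behead _ (x :: p).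
have /andP[y_core /eqP y_deg] := inD y (p_sub y y_p).
have /andP[yp_core _] := inD yp yp_in; have /andP[yn_core _] := inD yn (p_sub yn yn_p).
rewrite /gadget_inner_ok; have [// | y_neq2] := eqVneq (deg e y) 2.
have y_source : source e y by rewrite /source ltn_neqAle eq_sym y_neq2 -y_deg deg_in_le_deg.
rewrite y_source; apply/forallP => u; apply/implyP => /andP[/andP[y_u u_neq_p] u_neq_n].
have u_ray : u \notin core.
  apply/negP => u_core; have nbr v : v \in core -> e y v -> v \in [set w in core | e y w].
    by move=> v_core y_v; rewrite in_set v_core.
  have := card_le2_mem (eq_leq y_deg) (nbr _ yp_core (etrans (e_sym _ _) yp_y))
    (nbr _ yn_core y_yn) (nbr _ u_core y_u) neq_pn.
  by case=> u_eq; [move: u_neq_p | move: u_neq_n]; rewrite u_eq eqxx.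
have [t yt_ray] := ray_from_nbr y_source y_u u_ray.
have t_lt : size (u :: t) < L.+2.
  by apply: leq_ltn_trans (ray_size_le_Cd 1 yt_ray) _; rewrite ltnS; apply/leqW/ltnW.
apply/existsP; exists (Ordinal t_lt); apply/existsP; exists (in_tuple (u :: t)).
by rewrite yt_ray mem_head.
Qed.

(* Vertices with at most one core neighbour are forks with both ray lengths below L;
   for fixed lengths they induce a matching, so half of them are independent. *)
Lemma card_core_ends s0 :
  source e s0 -> (forall s, source e s -> 0 < deg_in core s) ->
  #|ends core| <= L * (L * (2 * B1)).
Proof.
move=> s0_source core_nbr.
pose F (a b : 'I_L) := [set v in ends core | is_fork e a b v].
have F_card a b : #|F a b| <= 2 * B1.
  have F_deg : {in F a b, forall v, deg_in (F a b) v <= 1}.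
    move=> v /setIdP[/setIdP[_ v_end] _]; apply: leq_trans v_end.
    apply/subset_leq_card/subsetP => u /setIdP[/setIdP[/setIdP[u_core _] _] v_u].
    by rewrite in_set u_core.
  have [I IF [I_indep F_le]] := half_independent F_deg.
  apply: leq_trans F_le _; rewrite leq_mul2l /=.
  have [-> | [s sI]] := set_0Vmem I; first by rewrite cards0.
  have I_forks : {in I, forall s, is_fork e a b s}.
    by move=> v /(subsetP IF) /setIdP[].
  have [a_gt0 b_gt0] := fork_gt0 (I_forks s sI).
  exact/ltnW/(leq_ltn_trans (leq_Fab I_indep I_forks) (Fab_lt a_gt0 b_gt0)).
have ends_sub : ends core \subset \bigcup_(a : 'I_L) \bigcup_(b : 'I_L) F a b.
  apply/subsetP => v v_end; have /setIdP[v_core v_le1] := v_end.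
  have v_source := core_end_source s0_source v_core v_le1.
  have v_deg1 : deg_in core v = 1 by have := core_nbr v v_source; lia.
  have [a [b fork]] := fork_of_core_end Cd1_lt v_source v_deg1.
  by apply/bigcupP; exists a => //; apply/bigcupP; exists b; rewrite // in_set v_end.
apply: leq_trans (subset_leq_card ends_sub) _; apply: leq_trans (card_bigcup_leq _ _) _.
rewrite -[L in L * _]card_ord -sum_nat_const; apply: leq_sum => a _.
apply: leq_trans (card_bigcup_leq _ _) _.
by rewrite -[L in L * _]card_ord -sum_nat_const; apply: leq_sum.
Qed.

Lemma card_core s0 : source e s0 -> #|core| <= 1 + (3 + 7 * K) * (L * (L * (2 * B1))).
Proof.
move=> s0_source.
case: (boolP [exists s, source e s && (deg_in core s == 0)]).
  case/existsP=> s /andP[s_source /eqP s_deg].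
  have := subset_leq_card (core_sub_source s_source s_deg); rewrite cards1 => core_le1.
  exact: leq_trans core_le1 (leq_addr _ _).
move/existsPn => no_spider.
have core_nbr s : source e s -> 0 < deg_in core s.
  by move=> s_source; have := no_spider s; rewrite s_source lt0n.
apply: leq_trans (leq_addl 1 _); apply: leq_trans (card_le_ends (K := K) _) _.
  move=> x p /core_deg2_path_gadget/gadget_size_le_Cd p_le.
  exact: leq_ltn_trans p_le CdL_lt.
by rewrite leq_mul2l (card_core_ends s0_source core_nbr) orbT.
Qed.

Lemma card_long_ray_vertices : #|~: ray_vertices 3| <= #|core| * (1 + L * (L * B2)).
Proof.
pose LR := \bigcup_(s in core) \bigcup_(c : 'I_L | 2 < c)
   \bigcup_(t in [set t : c.-tuple V | is_ray e s t]) [set x in t].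
have long_sub : ~: ray_vertices 3 \subset core :|: LR.
  apply/subsetP => x; rewrite in_setC in_setU => x_long; apply/orP.
  have [x_core | /notin_coreP[s [t [st_ray x_t]]]] := boolP (x \in core); [by left | right].
  have t_lt : size t < L by apply: leq_ltn_trans (ray_size_le_Cd 1 st_ray) Cd1_lt.
  have t_gt2 : 2 < size t.
    by rewrite ltnNge; apply: contra x_long => t_le2; apply/ray_verticesP; exists s, t.
  have s_core := source_in_core (ray_source st_ray).
  apply/bigcupP; exists s => //; apply/bigcupP; exists (Ordinal t_lt) => //.
  by apply/bigcupP; exists (in_tuple t); rewrite inE.
have LR_card : #|LR| <= #|core| * (L * (L * B2)).
  apply: leq_trans (card_bigcup_leq _ _) _; rewrite -sum_nat_const; apply: leq_sum => s _.
  apply: leq_trans (card_bigcup_leq _ _) _.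
  apply: (@leq_trans (\sum_(c : 'I_L | 2 < c) (L * B2))).
    apply: leq_sum => c c_gt2; apply: leq_trans (card_bigcup_leq _ _) _.
    apply: (@leq_trans (\sum_(t in [set t : c.-tuple V | is_ray e s t]) L)).
      by apply: leq_sum => t _; rewrite cardsE (leq_trans (card_size t)) // size_tuple ltnW.
    rewrite sum_nat_const mulnC leq_mul2l ltnW ?orbT //.
    exact: leq_ltn_trans (leq_Sc c s) (Sc_lt c_gt2).
  rewrite sum_nat_cond_const leq_mul2r; apply/orP; right.
  by apply: leq_trans (max_card _) _; rewrite card_ord.
apply: leq_trans (subset_leq_card long_sub) _; rewrite mulnDr muln1.
by apply: leq_trans (leq_card_setU _ _) _; rewrite leq_add2l.
Qed.

Lemma msplit_bound :
  msplit e <= L + (1 + (3 + 7 * K) * (L * (L * (2 * B1)))) * (1 + L * (L * B2)).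
Proof.
case: (boolP [exists s, source e s]) => [/existsP[s0 s0_source] | /existsPn no_source].
  have short_split : {in ~: (~: ray_vertices 3),
      forall v, #|[set u in ~: (~: ray_vertices 3) | e v u]| <= 1}.
    by move=> v; rewrite setCK; apply: short_ray_nbrs.
  apply: leq_trans (msplit_le short_split) _; apply: leq_trans (leq_addl L _).
  apply: leq_trans card_long_ray_vertices _.
  by rewrite leq_mul2r (card_core s0_source) orbT.
have all_split : {in ~: [set: V], forall v, #|[set u in ~: [set: V] | e v u]| <= 1}.
  by move=> v; rewrite setCT inE.
apply: leq_trans (msplit_le all_split) _; rewrite cardsT.
exact: leq_trans (card_le_Cd_no_source no_source) (leq_trans Cd1_lt (leq_addr _ _)).
Qed.
End Bounds.
End Tree.

Theorem lemma32 (C : forall V : finType, rel V -> Prop)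
  (HC : forall (V : finType) (e : rel V), C V e -> is_tree e) :
  ~ (exists M : nat, forall (V : finType) (e : rel V), C V e -> msplit e <= M) ->
  (forall B : nat, exists a b : nat, [/\ 0 < a, 0 < b &
      exists (V : finType) (e : rel V), C V e /\ B <= Fab e a b])
  \/ (forall B : nat, exists c : nat, 2 < c /\
      exists (V : finType) (e : rel V), C V e /\ B <= Sc e c)
  \/ (exists d : nat, 0 < d /\ forall B : nat,
      exists (V : finType) (e : rel V), C V e /\ B <= Cd e d).
Proof.
move=> not_split; apply: NNPP => /not_or_and[no_forks /not_or_and[no_stars no_gadgets]].
apply: not_split.
have lt_of_not_le (f : forall V : finType, rel V -> nat) B :
    ~ (exists (V : finType) (e : rel V), C V e /\ B <= f V e) ->
    forall (V : finType) (e : rel V), C V e -> f V e < B.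
  by move=> not_le V e CVe; rewrite ltnNge; apply/negP => B_le; apply: not_le; exists V, e.
have [B1 no_fork_B1] := not_all_ex_not _ _ no_forks.
have [B2 no_star_B2] := not_all_ex_not _ _ no_stars.
have Cd_bounded d :
    0 < d -> exists Bd, ~ (exists (V : finType) (e : rel V), C V e /\ Bd <= Cd e d).
  by move=> d_gt0; apply: not_all_ex_not => Cd_unbounded; apply: no_gadgets; exists d.
have [L no_gadget_L] := Cd_bounded 1 isT; have [K no_gadget_K] := Cd_bounded L.+1 isT.
exists (L + (1 + (3 + 7 * K) * (L * (L * (2 * B1)))) * (1 + L * (L * B2))) => V e CVe.
have [_ e_sym e_irr e_conn e_acyclic] := HC V e CVe.
apply: (msplit_bound e_sym e_irr e_acyclic e_conn).
- move=> a b a_gt0 b_gt0; apply: (lt_of_not_le (fun V e => Fab e a b)) CVe => Fab_le.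
  by apply: no_fork_B1; exists a, b.
- move=> c c_gt2; apply: (lt_of_not_le (fun V e => Sc e c)) CVe => Sc_le.
  by apply: no_star_B2; exists c.
- exact: (lt_of_not_le (fun V e => Cd e 1)) no_gadget_L V e CVe.
- exact: (lt_of_not_le (fun V e => Cd e L.+1)) no_gadget_K V e CVe.
Qed.
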